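(* For every node-edge-checkable problem $P$, the problem $\mathrm{R}^*(P)$ allows port-local relaxations. That is, for every node-edge-checkable problem $\Pi$ with $\Pi\xrightarrow{0}\mathrm{R}^*(P)$, there is a port-local relaxation from $\Pi$ to $\mathrm{R}^*(P)$.
   Context: Fix $\Delta$. A node-edge-checkable problem $\Pi=(\Sigma_\Pi,\mathcal{N}_\Pi,\mathcal{E}_\Pi)$ has a finite label set, a node constraint $\mathcal{N}_\Pi$ (a set of cardinality-$\Delta$ multisets over $\Sigma_\Pi$) and an edge constraint $\mathcal{E}_\Pi$ (a set of cardinality-$2$ multisets). Relaxation. $\Pi\xrightarrow{0}\Pi'$ means there is a map $f$ with the following properties. For every $C=L_1\dots L_\Delta\in\mathcal{N}_\Pi$ and every $j$, $f$ assigns a label $f(C,j)\in\Sigma_{\Pi'}$. The map must satisfy: - $f(C,1)\dots f(C,\Delta)\in\mathcal{N}_{\Pi'}$; - whenever the $j$-th entry of $C$ and the $j'$-th entry of $C'$ form an element of $\mathcal{E}_\Pi$, then $f(C,j)f(C',j')\in\mathcal{E}_{\Pi'}$. A port-local relaxation from $\Pi$ to $\hat\Pi$ is a function $g:\Sigma_\Pi\to\Sigma_{\hat\Pi}$ such that: - $g(L_1)\dots g(L_\Delta)\in\mathcal{N}_{\hat\Pi}$ for every $L_1\dots L_\Delta\in\mathcal{N}_\Pi$; - $g(L_1)g(L_2)\in\mathcal{E}_{\hat\Pi}$ for every $L_1L_2\in\mathcal{E}_\Pi$. The problem $\mathrm{R}^*(P)$ is defined as follows. - Labels are the nonempty subsets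 of $\Sigma_P$. - Node configurations are the $S_1\dots S_\Delta$ admitting $L_i\in S_i$ with $L_1\dots L_\Delta\in\mathcal{N}_P$. - Edge configurations are the $S_1S_2$ with $L_1L_2\in\mathcal{E}_P$ for all $L_1\in S_1,L_2\in S_2$. *)

From mathcomp Require Import all_boot.
Set Implicit Arguments. Unset Strict Implicit. Unset Printing Implicit Defensive.

(* Node configurations (multisets of size D) are represented by D-tuples,
   the node constraint being required to be invariant under permutations;
   edge configurations (multisets of size 2) by a symmetric relation. *)
Record problem (D : nat) := Problem {
  lab : finType;
  node : pred (D.-tuple lab);
  edge : rel lab
}.
Arguments lab {D} p.
Arguments node {D} p.
Arguments edge {D} p.

Definition wf_problem D (P : problem D) : Prop :=
  (forall t t' : D.-tuple (lab P), perm_eq t t' -> node P t = node P t') /\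
  (forall x y : lab P, edge P x y = edge P y x).

Definition labels_used D (P : problem D) : Prop :=
  forall L : lab P, exists C : D.-tuple (lab P), node P C /\ L \in C.

Definition RLab D (P : problem D) : finType := {S : {set lab P} | S != set0}.

Definition Rstar D (P : problem D) : problem D :=
  @Problem D (RLab P)
    (fun t : D.-tuple (RLab P) =>
       [exists u : D.-tuple (lab P),
          [forall i : 'I_D, tnth u i \in val (tnth t i)] && node P u])
    (fun S1 S2 : RLab P =>
       [forall x in val S1, forall y in val S2, edge P x y]).

Definition relax0 D (Pi Pi' : problem D) : Prop :=
  exists f : D.-tuple (lab Pi) -> 'I_D -> lab Pi',
    (forall C, node Pi C -> node Pi' [tuple f C j | j < D]) /\
    (forall C C' (j j' : 'I_D), node Pi C -> node Pi C' ->
        edge Pi (tnth C j) (tnth C' j') -> edge Pi' (f C j) (f C' j')).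

Definition port_local_relax D (Pi Pi' : problem D) : Prop :=
  exists g : lab Pi -> lab Pi',
    (forall C, node Pi C -> node Pi' (map_tuple g C)) /\
    (forall L1 L2, edge Pi L1 L2 -> edge Pi' (g L1) (g L2)).

From mathcomp Require Import all_boot.
Set Implicit Arguments.

(* Given a zero-round relaxation f from Pi to R*(P), send a label L of Pi to
   the union of all sets f(C, j) over node configurations C of Pi carrying L
   at port j.  Every label is used, so this union is nonempty.  Node
   configurations of R*(P) are closed under enlarging the sets, and each
   f(C, j) is contained in the image of its label, so node configurations are
   preserved.  Edge configurations of R*(P) are checked on pairs of elements,
   and any pair drawn from the images of L1 and L2 comes from sets f(C, j) and
   f(C', j') that are compatible whenever L1 L2 is an edge configuration. *)

Section RstarConstraints.

Variables (D : nat) (P : problem D).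

Lemma Rstar_edgeP (S1 S2 : RLab P) :
  reflect (forall x y, x \in val S1 -> y \in val S2 -> edge P x y)
          (edge (Rstar P) S1 S2).
Proof.
apply: (iffP forallP) => [E12 x y x1 y2 | E12 x].
  by have /implyP/(_ x1)/forallP/(_ y)/implyP/(_ y2) := E12 x.
by apply/implyP => x1; apply/forallP => y; apply/implyP; apply: E12.
Qed.

Lemma Rstar_node_subset (t t' : D.-tuple (RLab P)) :
  (forall i, val (tnth t i) \subset val (tnth t' i)) ->
  node (Rstar P) t -> node (Rstar P) t'.
Proof.
move=> sub_tt' /existsP [u /andP [u_in_t Nu]].
apply/existsP; exists u; rewrite Nu andbT; apply/forallP => i.
exact: subsetP (sub_tt' i) _ (forallP u_in_t i).
Qed.

End RstarConstraints.

Section PortLocalFromRelax0.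

Variables (D : nat) (P Pi : problem D) (f : D.-tuple (lab Pi) -> 'I_D -> RLab P).

Definition port_union (L : lab Pi) : {set lab P} :=
  \bigcup_(C | node Pi C) \bigcup_(j | tnth C j == L) val (f C j).

Lemma port_unionP (L : lab Pi) (x : lab P) :
  reflect (exists C j, [/\ node Pi C, tnth C j = L & x \in val (f C j)])
          (x \in port_union L).
Proof.
apply: (iffP bigcupP) => [[C NC /bigcupP [j /eqP CjL fx]] | [C [j [NC CjL fx]]]].
  by exists C, j.
by exists C => //; apply/bigcupP; exists j; first exact/eqP.
Qed.

Lemma sub_port_union C j : node Pi C -> val (f C j) \subset port_union (tnth C j).
Proof. by move=> NC; apply/subsetP => x fx; apply/port_unionP; exists C, j. Qed.

Lemma port_union_neq0 : labels_used Pi -> forall L, port_union L != set0.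
Proof.
move=> used L; have [C [NC /tnthP [j CjL]]] := used L.
have /set0Pn [x fx] := valP (f C j).
by apply/set0Pn; exists x; apply/port_unionP; exists C, j.
Qed.

Hypothesis used : labels_used Pi.

Definition port_local_map (L : lab Pi) : RLab P :=
  exist _ (port_union L) (port_union_neq0 used L).

Lemma port_local_map_node C :
  node (Rstar P) [tuple f C j | j < D] -> node Pi C ->
  node (Rstar P) (map_tuple port_local_map C).
Proof.
move=> NfC NC; apply: Rstar_node_subset NfC => i.
by rewrite !tnth_map tnth_ord_tuple; exact: sub_port_union.
Qed.

Lemma port_local_map_edge L1 L2 :
  (forall C C' j j', node Pi C -> node Pi C' ->
     edge Pi (tnth C j) (tnth C' j') -> edge (Rstar P) (f C j) (f C' j')) ->
  edge Pi L1 L2 -> edge (Rstar P) (port_local_map L1) (port_local_map L2).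
Proof.
move=> f_edge E12; apply/Rstar_edgeP => x y.
move=> /port_unionP [C [j [NC CjL1 fx]]] /port_unionP [C' [j' [NC' CjL2 fy]]].
rewrite -CjL1 -CjL2 in E12.
exact: Rstar_edgeP (f_edge _ _ _ _ NC NC' E12) x y fx fy.
Qed.

End PortLocalFromRelax0.

Theorem mainTheorem10 (D : nat) (P Pi : problem D) :
  wf_problem P -> wf_problem Pi -> labels_used Pi ->
  relax0 Pi (Rstar P) -> port_local_relax Pi (Rstar P).
Proof.
move=> _ _ used [f [f_node f_edge]].
exists (port_local_map f used); split => [C NC | L1 L2].
  exact: port_local_map_node (f_node C NC) NC.
exact: port_local_map_edge.
Qed.
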